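(* Let $\mathcal{X}$ be a finite set and $\underline{Q}$ a lower transition rate operator on $\mathcal{L}(\mathcal{X})$. Then for all $f\in\mathcal{L}(\mathcal{X})$, $x\in\mathcal{X}$ and $t,s>0$: (1) if $f(x)>\min f$ then $\underline{T}_tf(x)>\min f$; and $\underline{T}_tf(x)>\min f\iff\underline{T}_sf(x)>\min f$; (2) if $f(x)<\max f$ then $\underline{T}_tf(x)<\max f$; and $\underline{T}_tf(x)<\max f\iff\underline{T}_sf(x)<\max f$; (3) if $f(x)>\min f$ then $\overline{T}_tf(x)>\min f$; and $\overline{T}_tf(x)>\min f\iff\overline{T}_sf(x)>\min f$; (4) if $f(x)<\max f$ then $\overline{T}_tf(x)<\max f$; and $\overline{T}_tf(x)<\max f\iff\overline{T}_sf(x)<\max f$.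
   Context: $\mathcal{L}(\mathcal{X})$ is the set of real-valued functions on $\mathcal{X}$ with pointwise operations and order, real constants identified with constant functions, $\mathbb{I}_y$ the indicator of $\{y\}$. A lower transition rate operator is a map $\underline{Q}\colon\mathcal{L}(\mathcal{X})\to\mathcal{L}(\mathcal{X})$ such that for all $f,g$, $\lambda\ge0$, $\mu\in\mathbb{R}$, $x,y\in\mathcal{X}$: $\underline{Q}(\mu)=0$; $\underline{Q}(f+g)\ge\underline{Q}f+\underline{Q}g$; $\underline{Q}(\lambda f)=\lambda\underline{Q}f$; $x\ne y\Rightarrow\underline{Q}(\mathbb{I}_y)(x)\ge0$. For each $f$, $t\mapsto\underline{T}_tf$ is the unique solution on $[0,\infty)$ of $\frac{d}{dt}\underline{T}_tf=\underline{Q}\,\underline{T}_tf$ with $\underline{T}_0f=f$ (existence and uniqueness are known), and $\overline{T}_tf\coloneqq-\underline{T}_t(-f)$. *)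

From HB Require Import structures.
From mathcomp Require Import all_boot all_order all_algebra.
From mathcomp Require Import all_classical all_reals all_analysis.
Set Implicit Arguments. Unset Strict Implicit. Unset Printing Implicit Defensive.
Import Order.TTheory GRing.Theory Num.Theory.
Import numFieldNormedType.Exports.
Local Open Scope classical_set_scope.
Local Open Scope ring_scope.

(* L(X) = X -> R; real constants are constant functions; indicator of {y}. *)
Definition cst_fun {X : finType} {R : realType} (mu : R) : X -> R := fun _ => mu.
Definition ind1 {X : finType} {R : realType} (y : X) : X -> R :=
  fun z => if z == y then 1 else 0.

Definition lower_rate_op {X : finType} {R : realType}
  (Q : (X -> R) -> (X -> R)) : Prop :=
  [/\ (forall mu : R, Q (cst_fun mu) = cst_fun 0),
      (forall (f g : X -> R) (x : X), Q f x + Q g x <= Q (fun z => f z + g z) x),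
      (forall (l : R) (f : X -> R), 0 <= l -> Q (fun z => l * f z) = (fun z => l * Q f z))
    & (forall x y : X, x != y -> 0 <= Q (ind1 y) x)].

(* T : R -> (X -> R) -> (X -> R) is the lower transition operator generated by Q:
   for each f, t |-> T t f solves d/dt T_t f = Q (T_t f) on [0, +oo) with T_0 f = f
   (derivative taken componentwise; right derivative at t = 0). *)
Definition solves_lower_ode {X : finType} {R : realType}
  (Q : (X -> R) -> (X -> R)) (T : R -> (X -> R) -> (X -> R)) : Prop :=
  forall f : X -> R,
    T 0 f = f /\
    (forall x : X,
       (forall t : R, 0 < t -> is_derive t 1 (fun s => T s f x) (Q (T t f) x)) /\
       ((fun h : R => h^-1 * (T h f x - f x)) @ 0^'+ --> Q f x)).

Definition upper_T {X : finType} {R : realType}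
  (T : R -> (X -> R) -> (X -> R)) (t : R) (f : X -> R) : X -> R :=
  fun x => - T t (fun z => - f z) x.

(* min and max of f over the (nonempty, since x0 : X) finite set X *)
Definition fmin {X : finType} {R : realType} (f : X -> R) (x0 : X) : R :=
  \big[Order.min/f x0]_(y : X) f y.
Definition fmax {X : finType} {R : realType} (f : X -> R) (x0 : X) : R :=
  \big[Order.max/f x0]_(y : X) f y.

(* Write u_t := T_t f - m for a lower bound m of f, and u_t := m - T_t f for an upper
   bound m; then u solves u' = P u with u_0 >= 0, where P is Q in the first case and its
   conjugate u |-> - Q (- u) in the second.  Both operators
   - are nonnegative at a minimum point of u, which keeps the flow nonnegative;
   - are bounded below by -c u on nonnegative u, so by Gronwall positive coordinates
     stay positive;
   - can feed the zero set Z of u_a (a > 0) at most at a rate proportional to the mass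
     of u on Z, so by Gronwall applied to that mass, coordinates vanishing at a vanish
     afterwards.
   Hence for t > 0 the coordinates where u_t > 0 do not depend on t.  The claims about
   the upper operator follow by applying this to -f. *)

From HB Require Import structures.
From mathcomp Require Import all_boot all_order all_algebra.
From mathcomp Require Import all_classical all_reals all_analysis.
From mathcomp Require Import ring lra.
Import Order.TTheory GRing.Theory Num.Theory.
Import numFieldNormedType.Exports.
Set Implicit Arguments. Unset Strict Implicit. Unset Printing Implicit Defensive.
Local Open Scope classical_set_scope.
Local Open Scope ring_scope.

Lemma ler_term_sum (R : numDomainType) (I : finType) (P : pred I) (F : I -> R) (i : I) :
  P i -> (forall j, P j -> 0 <= F j) -> F i <= \sum_(j | P j) F j.
Proof.
move=> Pi F0; rewrite (bigD1 i) //= lerDl sumr_ge0 // => j /andP[+ _]; exact: F0.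
Qed.

Section RealCalculus.
Variable R : realType.

Lemma is_derive_cvg (f : R -> R) (t d : R) : is_derive t 1 f d -> f x @[x --> t] --> f t.
Proof. by move=> [dv _]; exact/differentiable_continuous/derivable1_diffP. Qed.

Lemma is_derive_left_min_le0 (f : R -> R) (t d delta : R) : is_derive t 1 f d ->
  0 < delta -> (forall s, t - delta < s < t -> f t <= f s) -> d <= 0.
Proof.
move=> fd delta0 fmin; rewrite leNgt; apply/negP => d0.
have quot : (fun h : R => h^-1 * (f (h + t) - f t)) @ 0^'- --> d.
  apply: cvg_dnbhs_at_left; case: fd => dv <-; apply: cvg_trans dv.
  by apply: near_eq_cvg; near=> h; rewrite /= /shift [h *: 1]mulr1.
have [h [quot_pos h_neg h_gt]] : exists h,
    [/\ 0 < h^-1 * (f (h + t) - f t), h < 0 & - delta < h].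
  apply: (@filter_ex _ _ (at_left_proper_filter 0)); near=> h; split.
  - by near: h; apply: cvgr_gt quot _ d0.
  - by near: h; apply: nbhs_left_lt.
  - by near: h; apply: nbhs_left_gt; rewrite oppr_lt0.
have : f t <= f (h + t) by apply: fmin; apply/andP; split; lra.
by move: quot_pos; rewrite nmulr_rgt0 ?invr_lt0 // subr_lt0 ltNge => /negP.
Unshelve. all: by end_near.
Qed.

Lemma is_derive_expRM (k t : R) :
  is_derive t 1 (fun s => expR (k * s)) (expR (k * t) * k).
Proof.
have dk : is_derive t 1 (fun s : R => k * s) k.
  by move: (is_deriveZ k (is_derive_id t 1)) => /is_derive_eq; apply; exact: mulr1.
exact: (is_derive1_comp (f := expR) (g := fun s => k * s)).
Qed.

Lemma is_derive_bigsum (I : finType) (A : pred I) (F : I -> R -> R) (dF : I -> R) (t : R) :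
  (forall i, is_derive t 1 (F i) (dF i)) ->
  is_derive t 1 (fun s => \sum_(i in A) F i s) (\sum_(i in A) dF i).
Proof.
move=> dFi; rewrite -fct_sumE.
by elim/big_ind2 : _ => // [|] *; [exact: is_derive_cst | exact: is_deriveD].
Qed.

Lemma gronwall (phi dphi : R -> R) (a k : R) :
  (forall t, a < t -> is_derive t 1 phi (dphi t)) ->
  phi x @[x --> a^'+] --> phi a ->
  (forall t, a < t -> k * phi t <= dphi t) ->
  forall t, a <= t -> expR (k * (t - a)) * phi a <= phi t.
Proof.
move=> Dphi phi_right growth t; rewrite le_eqVlt => /predU1P [<-|hat].
  by rewrite subrr mulr0 expR0 mul1r.
pose e := fun s : R => expR (- k * s).
have De x : a < x -> is_derive x 1 (e * phi) (e x * dphi x + phi x * (e x * - k)).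
  by move=> ax; have := is_deriveM (is_derive_expRM (- k) x) (Dphi x ax).
have Cpsi : {within `[a, t], continuous (e * phi)}.
  apply/(continuous_within_itvP _ hat); split.
  - by move=> x /andP[ax _]; exact: is_derive_cvg (De x ax).
  - apply: cvgM; last exact: phi_right.
    by apply: cvg_at_right_filter; exact: is_derive_cvg (is_derive_expRM (- k) a).
  - exact/cvg_at_left_filter/is_derive_cvg/(De t hat).
have [c] : exists2 c, c \in `]a, t[ &
    (e * phi) t - (e * phi) a = (e c * dphi c + phi c * (e c * - k)) * (t - a).
  by apply: MVT hat _ Cpsi => x /andP[ax _]; exact: De.
rewrite in_itv /= => /andP[ac _] eqc.
(* the factor e absorbs the growth rate k, so e * phi is nondecreasing *)
have le_psi : (e * phi) a <= (e * phi) t.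
  rewrite -subr_ge0 eqc; apply: mulr_ge0; last by rewrite subr_ge0 ltW.
  rewrite mulrCA -mulrDr; apply: mulr_ge0; first exact/ltW/expR_gt0.
  by have := growth c ac; lra.
have := ler_wpM2l (ltW (expR_gt0 (k * t))) le_psi.
rewrite /= /e !mulrA -!expRD (_ : k * t + - k * t = 0) ?expR0 ?mul1r; last by ring.
by rewrite (_ : k * t + - k * a = k * (t - a)) //; ring.
Qed.

Lemma near_right_itv (t : R) (P : R -> Prop) : (\forall s \near t^'+, P s) ->
  exists2 d, 0 < d & forall s, t < s < t + d -> P s.
Proof.
move=> /nbhs_ballP [d d0 Pd]; exists d => // s /andP[ts std]; apply: Pd => //.
by rewrite /ball /= ltr_norml; apply/andP; split; lra.
Qed.

Lemma first_nonpos_time (I : finType) (phi : I -> R -> R) (j : I) (t : R) :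
  (forall i, 0 < phi i 0) ->
  (forall i, phi i x @[x --> 0^'+] --> phi i 0) ->
  (forall i (s : R), 0 < s -> phi i x @[x --> s] --> phi i s) ->
  0 <= t -> phi j t <= 0 ->
  exists tau, [/\ 0 < tau, exists i, phi i tau <= 0, forall i, 0 <= phi i tau
    & forall i (s : R), 0 <= s < tau -> 0 < phi i s].
Proof.
move=> phi0 right0 cont t0 phijt.
have right_cont i (s : R) : 0 <= s -> phi i x @[x --> s^'+] --> phi i s.
  rewrite le_eqVlt => /predU1P[<-|s0]; first exact: right0.
  exact/cvg_at_right_filter/cont.
pose S := [set s | 0 <= s /\ exists i, phi i s <= 0].
have St : S t by split => //; exists j.
have S_inf : has_inf S by split; [exists t | exists 0 => s []].
pose tau := inf S.
have tau0 : 0 <= tau by apply: lb_le_inf => //; [exists t | move=> s []].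
have before i (s : R) : 0 <= s < tau -> 0 < phi i s.
  case/andP=> s0 stau; rewrite ltNge; apply/negP => si.
  have : tau <= s by apply: (ge_inf (proj2 S_inf)); split => //; exists i.
  by rewrite leNgt stau.
have [i phi_i] : exists i, phi i tau <= 0.
  apply: contrapT => /forallNP tau_pos.
  have {}tau_pos k : 0 < phi k tau by rewrite ltNge; apply/negP/tau_pos.
  have [d d0 after] : exists2 d, 0 < d & forall s, tau < s < tau + d -> forall k, 0 < phi k s.
    apply: near_right_itv; apply: (@filter_forall _ I (fun k s => 0 < phi k s)) => k.
    exact: cvgr_gt _ (right_cont k tau tau0) _ (tau_pos k).
  have [e [e0 [k ek]] etau] := inf_adherent d0 S_inf.
  have := ge_inf (proj2 S_inf) (conj e0 (ex_intro _ k ek)).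
  rewrite -/tau le_eqVlt => /predU1P[tau_e|tau_e].
    by move: ek; rewrite -tau_e leNgt tau_pos.
  by move: ek; rewrite leNgt after // tau_e.
have tau_pos : 0 < tau.
  by rewrite lt_def tau0 andbT; apply/eqP => tau_eq0; move: phi_i; rewrite tau_eq0 leNgt phi0.
exists tau; split => //; first by exists i.
move=> k; rewrite leNgt; apply/negP => phik.
have [s [phis s0 stau]] : exists s, [/\ phi k s < 0, 0 <= s & s < tau].
  apply: (@filter_ex _ _ (at_left_proper_filter tau)); near=> s; split.
  - by near: s; apply: cvgr_lt _ (cvg_at_left_filter (cont k tau tau_pos)) _ phik.
  - by near: s; apply: nbhs_left_ge.
  - by near: s; apply: nbhs_left_lt.
by have := before k s; rewrite s0 stau => /(_ isT); rewrite ltNge ltW.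
Unshelve. all: by end_near.
Qed.

End RealCalculus.

Section RateProperties.
Variables (R : realType) (X : finType).
Implicit Types (P : (X -> R) -> X -> R) (u w : X -> R).

Definition nonneg_at_min P := forall u y, (forall z, u y <= u z) -> 0 <= P u y.

Definition linear_lower_bound P := exists2 c, 0 <= c &
  forall u y, (forall z, 0 <= u z) -> - (c * u y) <= P u y.

Definition zero_set_inflow_bound P := exists2 C, 0 <= C &
  forall w u y, (forall z, 0 <= w z) -> (forall z, 0 <= u z) -> w y = 0 -> P w y <= 0 ->
    P u y <= C * \sum_(z | w z == 0) u z.

Definition upper_rate P u : X -> R := fun y => - P (fun z => - u z) y.

End RateProperties.

Section LowerRateOperator.
Variables (R : realType) (X : finType) (Q : (X -> R) -> X -> R).
Hypothesis hQ : lower_rate_op Q.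
Implicit Types (u v w : X -> R).

Lemma lrate_cst (c : R) x : Q (fun _ => c) x = 0.
Proof. by case: hQ => Qcst _ _ _; rewrite (Qcst c). Qed.

Lemma lrate_ext u v x : (forall z, u z = v z) -> Q u x = Q v x.
Proof. by move=> /funext ->. Qed.

Lemma lrate_superadd u v w x : (forall z, u z + v z = w z) -> Q u x + Q v x <= Q w x.
Proof. by case: hQ => _ Qadd _ _ /funext <-; exact: Qadd. Qed.

Lemma lrate_homo (l : R) u x : 0 <= l -> Q (fun z => l * u z) x = l * Q u x.
Proof. by case: hQ => _ _ Qhomo _ l0; rewrite (Qhomo l u l0). Qed.

Lemma lrate_ind_offdiag x y : x != y -> 0 <= Q (ind1 y) x.
Proof. by case: hQ => _ _ _ Qind; exact: Qind. Qed.

Lemma lrate_shift u (c : R) x : Q (fun z => u z + c) x = Q u x.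
Proof.
apply/eqP; rewrite eq_le; apply/andP; split.
- have := @lrate_superadd (fun z => u z + c) (fun _ => - c) u x.
  by rewrite lrate_cst addr0; apply=> z; ring.
- by have := @lrate_superadd u (fun _ => c) _ x (fun z => erefl); rewrite lrate_cst addr0.
Qed.

Lemma lrate_le_upper u x : Q u x <= upper_rate Q u x.
Proof.
have := @lrate_superadd u (fun z => - u z) (fun _ => 0) x (fun z => subrr (u z)).
by rewrite lrate_cst /upper_rate; lra.
Qed.

Lemma lrate_sum_superadd (I : finType) (a : I -> R) (F : I -> X -> R) x :
  (forall i, 0 <= a i) -> \sum_i a i * Q (F i) x <= Q (fun z => \sum_i a i * F i z) x.
Proof.
move=> a0; rewrite /index_enum; elim: (Finite.enum I) => [|i r IH].
  by rewrite big_nil (@lrate_ext _ (fun _ => 0)) ?lrate_cst // => z; rewrite big_nil.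
rewrite big_cons -lrate_homo //.
apply: le_trans (@lrate_superadd (fun z => a i * F i z) _ _ x _); last first.
  by move=> z; rewrite big_cons.
by rewrite lerD2l.
Qed.

Lemma sum_ind1 u z : \sum_y u y * ind1 y z = u z.
Proof.
rewrite (bigD1 z) //= /ind1 eqxx mulr1 big1 ?addr0 // => y yz.
by rewrite ifN ?mulr0 // eq_sym.
Qed.

Lemma lrate_ind1_decomp u x : (forall z, 0 <= u z) ->
  \sum_y u y * Q (ind1 y) x <= Q u x.
Proof.
by move=> u0; rewrite -(lrate_ext x (sum_ind1 u)); exact: lrate_sum_superadd.
Qed.

Lemma lrate_ind_diag x : Q (ind1 x) x <= 0.
Proof.
have := @lrate_ind1_decomp (fun _ => 1) x (fun _ => ler01).
rewrite lrate_cst (bigD1 x) //= mul1r.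
have : 0 <= \sum_(y | y != x) 1 * Q (ind1 y) x.
  by apply: sumr_ge0 => y yx; rewrite mul1r lrate_ind_offdiag // eq_sym.
lra.
Qed.

Lemma lrate_diag_lower u x : (forall z, 0 <= u z) -> u x * Q (ind1 x) x <= Q u x.
Proof.
move=> u0; apply: le_trans (lrate_ind1_decomp x u0); rewrite (bigD1 x) //= lerDl.
by apply: sumr_ge0 => y yx; rewrite mulr_ge0 // lrate_ind_offdiag // eq_sym.
Qed.

Lemma lrate_ge0_at_min u y : (forall z, u y <= u z) -> 0 <= Q u y.
Proof.
move=> umin; rewrite -(lrate_shift u (- u y) y).
have := @lrate_diag_lower (fun z => u z + - u y) y.
by rewrite subrr mul0r; apply=> z; rewrite subr_ge0.
Qed.

Lemma lrate_linear_lower : linear_lower_bound Q.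
Proof.
have diag0 y : 0 <= - Q (ind1 y) y by rewrite oppr_ge0 lrate_ind_diag.
exists (\sum_y - Q (ind1 y) y); first exact: sumr_ge0.
move=> u y u0; apply: le_trans (lrate_diag_lower y u0).
rewrite -mulNr [_ * u y]mulrC; apply: ler_wpM2l => //.
by rewrite lerNl; apply: (ler_term_sum (P := xpredT)).
Qed.

Lemma lrate_dominated_by_zero_set w v y : (forall z, 0 <= w z) -> (forall z, 0 <= v z) ->
  (forall z, w z = 0 -> v z = 0) -> w y = 0 ->
  exists2 l, 0 <= l & 0 <= Q (fun z => l * w z - v z) y.
Proof.
move=> w0 v0 vw wy0.
pose l := \sum_(z | w z != 0) v z / w z.
exists l; first by apply: sumr_ge0 => z _; rewrite divr_ge0.
(* l * w - v is nonnegative and vanishes at y, so y is a minimum point *)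
apply: lrate_ge0_at_min => z; rewrite wy0 vw // mulr0 subr0 subr_ge0.
have [wz0|wz0] := eqVneq (w z) 0; first by rewrite wz0 vw // mulr0.
have : v z / w z <= l.
  by apply: (ler_term_sum (P := fun z => w z != 0)) => // j _; rewrite divr_ge0.
by rewrite ler_pdivrMr // lt_def wz0 w0.
Qed.

Definition neg_ind_bound := \sum_z \sum_y `|Q (fun x => - ind1 z x) y|.

Lemma neg_ind_bound_ge0 : 0 <= neg_ind_bound.
Proof. by apply: sumr_ge0 => *; apply: sumr_ge0. Qed.

Lemma lrate_neg_part (A : pred X) u y : (forall z, 0 <= u z) ->
  - (neg_ind_bound * \sum_(z | A z) u z) <= Q (fun z => - (if A z then u z else 0)) y.
Proof.
move=> u0; pose uA z := if A z then u z else 0.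
have uA0 z : 0 <= uA z by rewrite /uA; case: ifP.
have := lrate_sum_superadd (fun z x => - ind1 z x) y uA0.
rewrite (@lrate_ext _ (fun z => - uA z)) => [|z]; last first.
  by under eq_bigr do rewrite mulrN; rewrite sumrN sum_ind1.
apply: le_trans.
rewrite big_mkcond mulr_sumr -sumrN; apply: ler_sum => z _; rewrite -/(uA z).
rewrite -mulNr mulrC; apply: ler_wpM2l => //.
rewrite lerNl; apply: le_trans (ler_norm _) _; rewrite normrN.
have := ler_term_sum (P := xpredT) (F := fun y => `|Q (fun x => - ind1 z x) y|) (i := y) erefl
  (fun _ _ => normr_ge0 _).
move/le_trans; apply.
apply: (ler_term_sum (P := xpredT) (F := fun z => \sum_y `|Q (fun x => - ind1 z x) y|)) => //.
by move=> j _; exact: sumr_ge0.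
Qed.

Lemma lrate_inflow : zero_set_inflow_bound Q.
Proof.
exists neg_ind_bound; first exact: neg_ind_bound_ge0.
move=> w u y w0 u0 wy0 Qw.
pose uS z := if w z == 0 then 0 else u z.
have [l l0 hl] : exists2 l, 0 <= l & 0 <= Q (fun z => l * w z - uS z) y.
  by apply: lrate_dominated_by_zero_set => // z; rewrite /uS; [case: ifP | move=> ->; rewrite eqxx].
have split_u : Q u y + Q (fun z => - (if w z == 0 then u z else 0)) y <= Q uS y.
  by apply: lrate_superadd => z; rewrite /uS; case: ifP => _; ring.
have dom : Q uS y + Q (fun z => l * w z - uS z) y <= l * Q w y.
  by rewrite -lrate_homo //; apply: lrate_superadd => z; ring.
have := lrate_neg_part (fun z => w z == 0) y u0.
have : l * Q w y <= 0 by rewrite mulr_ge0_le0.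
lra.
Qed.

Lemma upper_rate_inflow : zero_set_inflow_bound (upper_rate Q).
Proof.
exists neg_ind_bound; first exact: neg_ind_bound_ge0.
rewrite /upper_rate => w u y w0 u0 wy0 Qw.
pose uS z := if w z == 0 then 0 else u z.
have [l l0 hl] : exists2 l, 0 <= l & 0 <= Q (fun z => l * w z - uS z) y.
  by apply: lrate_dominated_by_zero_set => // z; rewrite /uS; [case: ifP | move=> ->; rewrite eqxx].
have split_u : Q (fun z => - (if w z == 0 then u z else 0)) y + Q (fun z => - uS z) y
    <= Q (fun z => - u z) y.
  by apply: lrate_superadd => z; rewrite /uS; case: ifP => _; ring.
have dom : l * Q (fun z => - w z) y + Q (fun z => l * w z - uS z) y <= Q (fun z => - uS z) y.
  by rewrite -lrate_homo //; apply: lrate_superadd => z; ring.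
have := lrate_neg_part (fun z => w z == 0) y u0.
have : 0 <= l * Q (fun z => - w z) y by rewrite mulr_ge0 //; lra.
lra.
Qed.

Lemma upper_rate_ge0_at_min : nonneg_at_min (upper_rate Q).
Proof. by move=> u y umin; apply: le_trans (lrate_le_upper _ _); exact: lrate_ge0_at_min. Qed.

Lemma upper_rate_linear_lower : linear_lower_bound (upper_rate Q).
Proof.
have [c c0 Qc] := lrate_linear_lower; exists c => // u y u0.
exact: le_trans (Qc u y u0) (lrate_le_upper _ _).
Qed.

End LowerRateOperator.

Section NonnegativeFlow.
Variables (R : realType) (X : finType) (P : (X -> R) -> X -> R) (U : R -> X -> R).
Hypotheses (P_min : nonneg_at_min P) (P_lin : linear_lower_bound P)
  (P_inflow : zero_set_inflow_bound P).
Hypothesis U0_ge0 : forall y, 0 <= U 0 y.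
Hypothesis U_right0 : forall y, U h y @[h --> 0^'+] --> U 0 y.
Hypothesis U_deriv : forall y (t : R), 0 < t -> is_derive t 1 (fun s => U s y) (P (U t) y).

Lemma flow_right_cont y (a : R) : 0 <= a -> U h y @[h --> a^'+] --> U a y.
Proof.
rewrite le_eqVlt => /predU1P[<-|a0]; first exact: U_right0.
exact/cvg_at_right_filter/is_derive_cvg/(U_deriv y a0).
Qed.

Lemma flow_ge0 (t : R) y : 0 <= t -> 0 <= U t y.
Proof.
move=> t0; rewrite leNgt; apply/negP => Uty.
(* tilting by eps * (1 + s) makes the first zero of the tilted flow a point where some
   coordinate is minimal, hence increasing, yet reached from above *)
pose eps := - U t y / (2 * (1 + t)).
have eps0 : 0 < eps by apply: divr_gt0; lra.
pose psi z s := U s z + (eps + eps * s).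
have Daff (s : R) : is_derive s 1 (fun s : R => eps + eps * s) eps.
  have := is_deriveD (is_derive_cst eps s 1) (is_deriveZ eps (is_derive_id s 1)).
  by move/is_derive_eq; apply; rewrite add0r [eps *: 1]mulr1.
have Dpsi z (s : R) : 0 < s -> is_derive s 1 (psi z) (P (U s) z + eps).
  by move=> s0; exact: is_deriveD (U_deriv z s0) (Daff s).
have [tau [tau0 [z psiz] psi_ge0 psi_pos]] : exists tau, [/\ 0 < tau,
    exists z, psi z tau <= 0, forall z, 0 <= psi z tau
    & forall z (s : R), 0 <= s < tau -> 0 < psi z s].
  apply: (@first_nonpos_time _ _ psi y t) => //.
  - by move=> z; rewrite /psi mulr0 addr0; have := U0_ge0 z; lra.
  - move=> z; apply: cvgD; first exact: U_right0.
    by apply: cvg_at_right_filter; exact: is_derive_cvg (Daff 0).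
  - by move=> z s s0; exact: is_derive_cvg (Dpsi z s s0).
  - rewrite /psi (_ : eps + eps * t = - U t y / 2); first lra.
    by rewrite /eps; field; lra.
have zmin w : U tau z <= U tau w.
  by have := psi_ge0 w; move: psiz; rewrite /psi; lra.
have := P_min zmin.
have : P (U tau) z + eps <= 0.
  apply: (is_derive_left_min_le0 (Dpsi z tau tau0) tau0) => s /andP[s0 stau].
  have /(psi_pos z) : 0 <= s < tau by apply/andP; split; lra.
  lra.
lra.
Qed.

Lemma flow_pos_persist y (a t : R) : 0 <= a -> a <= t -> 0 < U a y -> 0 < U t y.
Proof.
move=> a0 at_ Uay; have [c c0 Pc] := P_lin.
have D (s : R) : a < s -> is_derive s 1 (fun s => U s y) (P (U s) y).
  by move=> as_; apply: U_deriv; lra.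
have K (s : R) : a < s -> - c * U s y <= P (U s) y.
  by move=> as_; rewrite mulNr; apply: Pc => z; apply: flow_ge0; lra.
apply: lt_le_trans _ (gronwall D (@flow_right_cont y a a0) K at_).
exact: mulr_gt0 (expR_gt0 _) Uay.
Qed.

Lemma flow_rate_le0_at_zero y (a : R) : 0 < a -> U a y = 0 -> P (U a) y <= 0.
Proof.
move=> a0 Uay; apply: (is_derive_left_min_le0 (U_deriv y a0) a0) => s /andP[s0 _].
by rewrite Uay flow_ge0 //; lra.
Qed.

Lemma flow_zero_persist y (a b : R) : 0 < a -> a <= b -> U a y = 0 -> U b y = 0.
Proof.
move=> a0 ab Uay; have [C C0 PC] := P_inflow.
pose A := [pred z | U a z == 0].
pose mass s := \sum_(z in A) U s z.
have Dmass (s : R) : 0 < s -> is_derive s 1 mass (\sum_(z in A) P (U s) z).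
  by move=> s0; apply: is_derive_bigsum => z; exact: U_deriv.
have inflow (s : R) : a < s -> \sum_(z in A) P (U s) z <= C * #|A|%:R * mass s.
  move=> as_; apply: (@le_trans _ _ (\sum_(z in A) C * mass s)).
    apply: ler_sum => z /eqP Uaz; apply: PC => // [w|w|]; try by apply: flow_ge0; lra.
    exact: flow_rate_le0_at_zero.
  by rewrite sumr_const mulr_natr mulrnAl.
have D (s : R) : a < s -> is_derive s 1 (fun s => - mass s) (- \sum_(z in A) P (U s) z).
  by move=> as_; apply: is_deriveN; apply: Dmass; lra.
have Cr : (fun s => - mass s) x @[x --> a^'+] --> - mass a.
  by apply: cvgN; apply: cvg_at_right_filter; exact: is_derive_cvg (Dmass a a0).
have K (s : R) : a < s -> C * #|A|%:R * - mass s <= - \sum_(z in A) P (U s) z.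
  by move=> as_; rewrite mulrN lerN2; apply: inflow.
have := gronwall D Cr K ab.
rewrite (_ : mass a = 0) ?oppr0 ?mulr0 ?oppr_ge0 => [mass_b|]; last first.
  by apply: big1 => z /eqP.
apply/eqP; rewrite eq_le flow_ge0 ?andbT; last lra.
apply: le_trans mass_b; apply: ler_term_sum; first by rewrite inE Uay.
by move=> z _; apply: flow_ge0; lra.
Qed.

Lemma flow_pos_iff y (t s : R) : 0 < t -> 0 < s -> (0 < U t y <-> 0 < U s y).
Proof.
move=> t0 s0; wlog ts : t s t0 s0 / t <= s.
  move=> hw; have [ts|/ltW st] := leP t s; first exact: hw.
  by symmetry; apply: hw.
split=> [|Usy]; first exact: flow_pos_persist (ltW t0) ts.
rewrite lt_def flow_ge0 ?andbT ?(ltW t0) //; apply/eqP => Uty.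
by move: Usy; rewrite (flow_zero_persist t0 ts Uty) ltxx.
Qed.

Lemma nonneg_flow_positivity :
  (forall y (t : R), 0 <= t -> 0 < U 0 y -> 0 < U t y) /\
  (forall y (t s : R), 0 < t -> 0 < s -> (0 < U t y <-> 0 < U s y)).
Proof.
split=> [y t t0|]; [exact: flow_pos_persist (lexx 0) t0 | exact: flow_pos_iff].
Qed.

End NonnegativeFlow.

Section LowerTransitionOperator.
Variables (R : realType) (X : finType).
Variables (Q : (X -> R) -> X -> R) (T : R -> (X -> R) -> X -> R).
Hypotheses (hQ : lower_rate_op Q) (hT : solves_lower_ode Q T).

Lemma lowerT_right_cont0 (f : X -> R) y : T h f y @[h --> 0^'+] --> f y.
Proof.
have [_ /(_ y)[_ quot]] := hT f.
have T_quot : \forall h \near 0^'+, f y + h * (h^-1 * (T h f y - f y)) = T h f y.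
  near=> h; rewrite mulrA mulfV ?mul1r; first by ring.
  by apply: lt0r_neq0; near: h; exact: nbhs_right_gt.
apply: cvg_trans (near_eq_cvg T_quot) _.
have lim : (fun h => f y + h * (h^-1 * (T h f y - f y))) @ 0^'+ --> f y + 0 * Q f y.
  by apply: cvgD; [exact: cvg_cst | apply: cvgM => //; exact/cvg_at_right_filter/cvg_id].
by rewrite mul0r addr0 in lim.
Unshelve. all: by end_near.
Qed.

Lemma lowerT_gt_lower_bound (f : X -> R) (m : R) : (forall y, m <= f y) ->
  (forall y (t : R), 0 <= t -> m < f y -> m < T t f y) /\
  (forall y (t s : R), 0 < t -> 0 < s -> (m < T t f y <-> m < T s f y)).
Proof.
move=> mf; have [T0 DT] := hT f.
pose U t y := T t f y - m.
have U0 y : 0 <= U 0 y by rewrite /U T0 subr_ge0.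
have U_right0 y : U h y @[h --> 0^'+] --> U 0 y.
  by rewrite /U T0; apply: cvgB; [exact: lowerT_right_cont0 | exact: cvg_cst].
have U_deriv y (t : R) : 0 < t -> is_derive t 1 (fun s => U s y) (Q (U t) y).
  move=> t0; have [/(_ t t0) D _] := DT y.
  have := is_deriveB D (is_derive_cst m t 1).
  by move/is_derive_eq; apply; rewrite subr0 /U (lrate_shift hQ).
have [persist iff] := nonneg_flow_positivity (lrate_ge0_at_min hQ) (lrate_linear_lower hQ)
  (lrate_inflow hQ) U0 U_right0 U_deriv.
split=> [y t t0 mfy|y t s t0 s0]; rewrite -subr_gt0.
  by apply: persist; rewrite // /U T0 subr_gt0.
by rewrite -[m < T s f y]subr_gt0; exact: iff.
Qed.

Lemma lowerT_lt_upper_bound (f : X -> R) (m : R) : (forall y, f y <= m) ->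
  (forall y (t : R), 0 <= t -> f y < m -> T t f y < m) /\
  (forall y (t s : R), 0 < t -> 0 < s -> (T t f y < m <-> T s f y < m)).
Proof.
move=> fm; have [T0 DT] := hT f.
pose U t y := m - T t f y.
have U0 y : 0 <= U 0 y by rewrite /U T0 subr_ge0.
have U_right0 y : U h y @[h --> 0^'+] --> U 0 y.
  by rewrite /U T0; apply: cvgB; [exact: cvg_cst | exact: lowerT_right_cont0].
have U_deriv y (t : R) : 0 < t -> is_derive t 1 (fun s => U s y) (upper_rate Q (U t) y).
  move=> t0; have [/(_ t t0) D _] := DT y.
  have := is_deriveB (is_derive_cst m t 1) D.
  move/is_derive_eq; apply; rewrite sub0r /upper_rate /U; congr (- _).
  by rewrite -(lrate_shift hQ (T t f) (- m)); apply: lrate_ext => // z; ring.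
have [persist iff] := nonneg_flow_positivity (upper_rate_ge0_at_min hQ)
  (upper_rate_linear_lower hQ) (upper_rate_inflow hQ) U0 U_right0 U_deriv.
split=> [y t t0 fmy|y t s t0 s0]; rewrite -subr_gt0.
  by apply: persist; rewrite // /U T0 subr_gt0.
by rewrite -[T s f y < m]subr_gt0; exact: iff.
Qed.

End LowerTransitionOperator.

Theorem proposition13 (R : realType) (X : finType)
  (Q : (X -> R) -> (X -> R)) (T : R -> (X -> R) -> (X -> R)) :
  lower_rate_op Q -> solves_lower_ode Q T ->
  forall (f : X -> R) (x : X) (t s : R), 0 < t -> 0 < s ->
  [/\ (fmin f x < f x -> fmin f x < T t f x) /\
        (fmin f x < T t f x <-> fmin f x < T s f x),
      (f x < fmax f x -> T t f x < fmax f x) /\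
        (T t f x < fmax f x <-> T s f x < fmax f x),
      (fmin f x < f x -> fmin f x < upper_T T t f x) /\
        (fmin f x < upper_T T t f x <-> fmin f x < upper_T T s f x)
    & (f x < fmax f x -> upper_T T t f x < fmax f x) /\
        (upper_T T t f x < fmax f x <-> upper_T T s f x < fmax f x)].
Proof.
move=> hQ hT f x t s t0 s0.
have min_le y : fmin f x <= f y by exact: bigmin_le.
have le_max y : f y <= fmax f x by exact: le_bigmax.
have [min_persist min_iff] := lowerT_gt_lower_bound hQ hT min_le.
have [max_persist max_iff] := lowerT_lt_upper_bound hQ hT le_max.
have Nmin_le y : - f y <= - fmin f x by rewrite lerN2.
have le_Nmax y : - fmax f x <= - f y by rewrite lerN2.
have [Nmin_persist Nmin_iff] := lowerT_lt_upper_bound hQ hT Nmin_le.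
have [Nmax_persist Nmax_iff] := lowerT_gt_lower_bound hQ hT le_Nmax.
rewrite /upper_T ltrNr ltrNl [_ < - T s _ _]ltrNr [- T s _ _ < _]ltrNl.
split; split=> [fx|].
- exact: min_persist (ltW t0) fx.
- exact: min_iff.
- exact: max_persist (ltW t0) fx.
- exact: max_iff.
- by apply: Nmin_persist (ltW t0) _; rewrite ltrN2.
- exact: Nmin_iff.
- by apply: Nmax_persist (ltW t0) _; rewrite ltrN2.
- exact: Nmax_iff.
Qed.
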